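(* Let $\lambda\neq0$ be real and $n,k\ge1$ integers with $n\ge k$. Then $$\sum_{j=0}^{n}\binom{n+k-1}{j}S_{2,\lambda}^{[2]}(n-j+k,2k)\,\beta_{j,\lambda} =(n+k-1)!\Bigg\{\sum_{l=k}^{n}\frac{S_{2,\lambda}^{[2]}(l+k-2,2k-2)}{(l+k-2)!}(-\lambda)^{n-l} +\sum_{j=k}^{n}\sum_{l=k}^{j}\frac{S_{2,\lambda}^{[2]}(l+k-2,2k-2)\,\beta_{n-j,\lambda}\,(-\lambda)^{j-l+1}}{(l+k-2)!\,(n-j)!}\Bigg\}.$$
   Context: For real $\lambda\neq0$, $(x)_{0,\lambda}=1$, $(x)_{n,\lambda}=x(x-\lambda)\cdots(x-(n-1)\lambda)$ for $n\ge1$; $e_{\lambda}(t)=\sum_{k\ge0}(1)_{k,\lambda}\frac{t^k}{k!}=(1+\lambda t)^{1/\lambda}$ (formal power series). The $2$-truncated degenerate Stirling numbers of the second kind: for $k\ge0$, $\frac{1}{k!}(e_\lambda(t)-1-t)^k=\sum_{n\ge 2k}S^{[2]}_{2,\lambda}(n,2k)\frac{t^n}{n!}$, with $S^{[2]}_{2,\lambda}(n,2k)=0$ for $0\le n<2k$ (so $S^{[2]}_{2,\lambda}(n,0)=1$ if $n=0$ and $0$ otherwise). The degenerate Bernoulli numbers: $\frac{t}{e_\lambda(t)-1}=\sum_{n\ge0}\beta_{n,\lambda}\frac{t^n}{n!}$. *)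

From mathcomp Require Import all_boot all_order all_algebra.
Set Implicit Arguments. Unset Strict Implicit. Unset Printing Implicit Defensive.
Import Order.TTheory GRing.Theory Num.Theory.
Local Open Scope ring_scope.

(* Formal power series over R are represented by their coefficient
   sequences  f : nat -> R  (f n = coefficient of t^n). *)

Section PS.
Variable R : realFieldType.

Definition ps_mul (f g : nat -> R) : nat -> R :=
  fun n => \sum_(i < n.+1) f i * g (n - i)%N.

Definition ps_one : nat -> R := fun n => if n == 0%N then 1 else 0.

Fixpoint ps_pow (f : nat -> R) (k : nat) : nat -> R :=
  match k with
  | 0%N => ps_one
  | k'.+1 => ps_mul f (ps_pow f k')
  end.

Fixpoint ps_inv_seq (c : nat -> R) (n : nat) : seq R :=
  match n with
  | 0%N => [:: (c 0%N)^-1]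
  | n'.+1 => let s := ps_inv_seq c n' in
             rcons s (- (c 0%N)^-1 *
                      \sum_(i < n'.+1) c i.+1 * nth 0 s (n' - i)%N)
  end.

Definition ps_inv (c : nat -> R) : nat -> R :=
  fun n => nth 0 (ps_inv_seq c n) n.

Definition dfall (lam x : R) (n : nat) : R :=
  \prod_(i < n) (x - i%:R * lam).

Definition e_lam (lam : R) : nat -> R :=
  fun n => dfall lam 1 n / (n`!)%:R.

Definition e_lam_trunc2 (lam : R) : nat -> R :=
  fun n => if (n <= 1)%N then 0 else e_lam lam n.

(* S2trunc lam n k = S^{[2]}_{2,lam}(n, 2k), defined by
   (1/k!) (e_lam(t) - 1 - t)^k = sum_n S^{[2]}_{2,lam}(n,2k) t^n / n! *)
Definition S2trunc (lam : R) (n k : nat) : R :=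
  (n`!)%:R * (ps_pow (e_lam_trunc2 lam) k n / (k`!)%:R).

(* (e_lam(t) - 1)/t = sum_m (1)_{m+1,lam}/(m+1)! t^m  (constant term 1) *)
Definition e_lam_m1_div_t (lam : R) : nat -> R :=
  fun m => e_lam lam m.+1.

(* degenerate Bernoulli numbers:
   t/(e_lam(t) - 1) = ((e_lam(t)-1)/t)^{-1} = sum_n beta_{n,lam} t^n/n! *)
Definition dbeta (lam : R) (n : nat) : R :=
  (n`!)%:R * ps_inv (e_lam_m1_div_t lam) n.

End PS.

From mathcomp Require Import all_boot all_order all_algebra.
From mathcomp Require Import ring zify.
Import Order.TTheory GRing.Theory Num.Theory.
Local Open Scope ring_scope.

Set Implicit Arguments.
Unset Strict Implicit.
Unset Printing Implicit Defensive.

(* Put T = e_lam(t) - 1 - t, Q = (e_lam(t) - 1) / t, B = 1 / Q and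
   V = 1 / (1 + lam t).
   The degenerate exponential solves (1 + lam t) e_lam' = e_lam, so
   B (e_lam' - 1) = t V - lam t B V and hence
   B (T^k)' = k T^(k-1) (t V - lam t B V).
   The coefficient of t^(n+k-1) on the left is, up to (n+k-1)!/k!, the
   left-hand side of the identity; on the right it splits into the
   coefficients of T^(k-1) V and of B T^(k-1) V, which are the two sums.
   Formal power series are manipulated through their truncations, which
   multiply like polynomials modulo t^N. *)

Lemma big_nat_shift (T : Type) (idx : T) (op : T -> T -> T)
    (F G : nat -> T) (a b c d : nat) :
  (b - a = d - c)%N -> (forall i, (i < b - a)%N -> F (i + a)%N = G (i + c)%N) ->
  \big[op/idx]_(a <= i < b) F i = \big[op/idx]_(c <= i < d) G i.
Proof.
move=> hlen hFG; rewrite -[a]add0n -[c]add0n !big_addn -hlen.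
by apply: eq_big_nat => i /andP [_ hi]; apply: hFG.
Qed.

Lemma natr_fact_neq0 (R : numDomainType) n : n`!%:R != 0 :> R.
Proof. by rewrite pnatr_eq0 -lt0n fact_gt0. Qed.

Section CongruenceModXn.
Variable R : nzRingType.
Implicit Types p q : {poly R}.

Definition eqmodX (N : nat) p q := take_poly N p = take_poly N q.

Lemma eqmodXP N p q : eqmodX N p q <-> (forall i, (i < N)%N -> p`_i = q`_i).
Proof.
rewrite /eqmodX; split=> [h i hi | h].
  by have := congr1 (fun r : {poly R} => r`_i) h; rewrite /= !coef_take_poly hi.
by apply/polyP => i; rewrite !coef_take_poly; case: ifP => // /h.
Qed.

Lemma eqmodX_refl N p : eqmodX N p p.
Proof. by []. Qed.

Lemma eqmodX_sym N p q : eqmodX N p q -> eqmodX N q p.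
Proof. exact: esym. Qed.

Lemma eqmodX_trans N p q r : eqmodX N p q -> eqmodX N q r -> eqmodX N p r.
Proof. exact: etrans. Qed.

Lemma eqmodX_add N p p' q q' :
  eqmodX N p p' -> eqmodX N q q' -> eqmodX N (p + q) (p' + q').
Proof. by rewrite /eqmodX !take_polyD => -> ->. Qed.

Lemma eqmodX_sub N p p' q q' :
  eqmodX N p p' -> eqmodX N q q' -> eqmodX N (p - q) (p' - q').
Proof.
move=> /eqmodXP h1 /eqmodXP h2.
by apply/eqmodXP => i hi; rewrite !coefB h1 ?h2.
Qed.

Lemma eqmodX_mul N p p' q q' :
  eqmodX N p p' -> eqmodX N q q' -> eqmodX N (p * q) (p' * q').
Proof.
move=> /eqmodXP h1 /eqmodXP h2; apply/eqmodXP => i hi; rewrite !coefM.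
by apply: eq_bigr => j _; have hj := ltn_ord j; rewrite h1 ?h2 //; lia.
Qed.

Lemma eqmodX_muln N p q k : eqmodX N p q -> eqmodX N (p *+ k) (q *+ k).
Proof. by move=> /eqmodXP h; apply/eqmodXP => i hi; rewrite !coefMn h. Qed.

Lemma eqmodX_exp N p q k : eqmodX N p q -> eqmodX N (p ^+ k) (q ^+ k).
Proof. by move=> h; elim: k => [|k ih] //; rewrite !exprS; apply: eqmodX_mul. Qed.

Lemma eqmodX_deriv N p q : eqmodX N.+1 p q -> eqmodX N p^`() q^`().
Proof. by move=> /eqmodXP h; apply/eqmodXP => i hi; rewrite !coef_deriv h. Qed.

End CongruenceModXn.

Section FormalSeries.
Variable R : realFieldType.
Implicit Types f g c : nat -> R.

Definition ps_trunc (N : nat) f : {poly R} := \poly_(i < N) f i.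

Definition ps_deriv f : nat -> R := fun i => f i.+1 *+ i.+1.

Lemma coef_ps_trunc N f i : (i < N)%N -> (ps_trunc N f)`_i = f i.
Proof. by move=> hi; rewrite coef_poly hi. Qed.

Lemma ps_trunc_le M N f : (M <= N)%N -> eqmodX M (ps_trunc N f) (ps_trunc M f).
Proof.
by move=> hMN; apply/eqmodXP => i hi; rewrite !coef_ps_trunc // (leq_trans hi).
Qed.

Lemma coef_ps_trunc_mul N f g n :
  (n < N)%N -> (ps_trunc N f * ps_trunc N g)`_n = ps_mul f g n.
Proof.
move=> hn; rewrite coefM; apply: eq_bigr => i _.
have hi := ltn_ord i; rewrite !coef_ps_trunc //; lia.
Qed.

Lemma ps_trunc_mul N f g :
  eqmodX N (ps_trunc N (ps_mul f g)) (ps_trunc N f * ps_trunc N g).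
Proof. by apply/eqmodXP => i hi; rewrite coef_ps_trunc_mul ?coef_ps_trunc. Qed.

Lemma ps_trunc_one N : eqmodX N (ps_trunc N (ps_one R)) 1.
Proof.
apply/eqmodXP => i hi.
by rewrite coef_ps_trunc // coef1 /ps_one; case: (i == 0%N).
Qed.

Lemma ps_trunc_pow N f k :
  eqmodX N (ps_trunc N (ps_pow f k)) (ps_trunc N f ^+ k).
Proof.
elim: k => [|k ih] /=; first exact: ps_trunc_one.
rewrite exprS; apply: eqmodX_trans (ps_trunc_mul _ _ _) _.
exact: eqmodX_mul (eqmodX_refl _ _) ih.
Qed.

Lemma ps_trunc_deriv N f : ps_trunc N (ps_deriv f) = (ps_trunc N.+1 f)^`().
Proof.
apply/polyP => i; rewrite coef_deriv !coef_poly ltnS.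
by case: ifP => // _; rewrite mul0rn.
Qed.

Lemma ps_trunc_deriv_pow N f k :
  eqmodX N (ps_trunc N (ps_deriv (ps_pow f k)))
           (ps_trunc N (ps_deriv f) * ps_trunc N f ^+ k.-1 *+ k).
Proof.
rewrite !ps_trunc_deriv.
apply: eqmodX_trans (eqmodX_deriv (ps_trunc_pow _ _ _)) _.
rewrite deriv_exp; apply/eqmodX_muln/eqmodX_mul; first exact: eqmodX_refl.
exact/eqmodX_exp/ps_trunc_le.
Qed.

Lemma ps_mulC f g n : ps_mul f g n = ps_mul g f n.
Proof.
rewrite /ps_mul (reindex_inj rev_ord_inj); apply: eq_bigr => i _ /=.
by rewrite subKn 1?mulrC // -ltnS.
Qed.

Lemma ps_mul_from a f g n : (forall i, (i < a)%N -> f i = 0) ->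
  ps_mul f g n = \sum_(a <= i < n.+1) f i * g (n - i)%N.
Proof.
move=> f0; have [han | hna] := leqP a n.+1; last first.
  rewrite big_geq ?(ltnW hna) // /ps_mul big1 // => i _.
  by rewrite f0 ?mul0r // (leq_trans (ltn_ord i) (ltnW hna)).
rewrite /ps_mul -(big_mkord xpredT (fun i => f i * g (n - i)%N)).
rewrite (@big_cat_nat _ _ _ a 0 n.+1) //= big_nat_cond big1 ?add0r //.
by move=> i /andP [/andP [_ hi] _]; rewrite f0 ?mul0r.
Qed.

Lemma ps_mul_eq0 a f g n : (forall i, (i < a)%N -> f i = 0) -> (n < a)%N ->
  ps_mul f g n = 0.
Proof. by move=> f0 hn; rewrite (ps_mul_from _ _ f0) big_geq. Qed.

Lemma ps_pow_eq0 d f k n : (forall i, (i < d)%N -> f i = 0) -> (n < d * k)%N ->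
  ps_pow f k n = 0.
Proof.
move=> f0; elim: k n => [|k ih] n hn; first by rewrite muln0 in hn.
rewrite /= (ps_mul_from _ _ f0) big_nat_cond big1 //.
move=> i /andP [/andP [hdi hin] _].
by rewrite ih ?mulr0 //; lia.
Qed.

Lemma size_ps_inv_seq c n : size (ps_inv_seq c n) = n.+1.
Proof. by elim: n => [|n ih] //=; rewrite size_rcons ih. Qed.

Lemma nth_ps_inv_seq c n i : (i <= n)%N -> nth 0 (ps_inv_seq c n) i = ps_inv c i.
Proof.
elim: n => [|n ih] hi; first by move: hi; rewrite leqn0 => /eqP ->.
rewrite leq_eqVlt in hi; case/orP: hi => [/eqP -> // | hi].
by rewrite /= nth_rcons size_ps_inv_seq hi ih.
Qed.

Lemma ps_invS c n :
  ps_inv c n.+1 = - (c 0%N)^-1 * \sum_(i < n.+1) c i.+1 * ps_inv c (n - i)%N.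
Proof.
rewrite /ps_inv /= nth_rcons size_ps_inv_seq ltnn eqxx; congr (_ * _).
by apply: eq_bigr => i _; rewrite nth_ps_inv_seq // leq_subr.
Qed.

Lemma ps_mul_inv c n : c 0%N != 0 -> ps_mul c (ps_inv c) n = ps_one R n.
Proof.
move=> c0; rewrite /ps_mul /ps_one; case: n => [|n].
  by rewrite big_ord1 /ps_inv /= mulfV.
rewrite big_ord_recl /= subn0 ps_invS mulrA mulrN mulfV // mulN1r.
by under [X in _ + X]eq_bigr => i _ do rewrite subSS; rewrite addNr.
Qed.

Lemma binomial_egf_deriv f g m :
  \sum_(0 <= j < m.+1)
     'C(m, j)%:R * (((m - j).+1)`!%:R * f (m - j).+1) * (j`!%:R * g j)
  = m`!%:R * ps_mul g (ps_deriv f) m.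
Proof.
rewrite /ps_mul big_distrr big_mkord; apply: eq_bigr => j _ /=.
have hj : (j <= m)%N by rewrite -ltnS.
have hfact : ('C(m, j) * ((m - j).+1)`! * j`! = m`! * (m - j).+1)%N.
  by rewrite factS -(bin_fact hj); lia.
rewrite /ps_deriv -mulr_natl.
transitivity (('C(m, j) * ((m - j).+1)`! * j`!)%N%:R * (f (m - j).+1 * g j));
  first by rewrite !natrM; ring.
by rewrite hfact natrM; ring.
Qed.

End FormalSeries.

Section DegenerateExponential.
Variables (R : realFieldType) (lam : R).

Local Notation E := (e_lam lam).
Local Notation T := (e_lam_trunc2 lam).
Local Notation Q := (e_lam_m1_div_t lam).
Local Notation B := (ps_inv (e_lam_m1_div_t lam)).
Local Notation V := (fun i : nat => (- lam) ^+ i).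
Local Notation W k := (ps_mul (ps_pow (e_lam_trunc2 lam) k.-1) V).

Lemma e_lam0 : E 0 = 1.
Proof. by rewrite /e_lam /dfall big_ord0 fact0 divr1. Qed.

Lemma e_lam1 : E 1 = 1.
Proof. by rewrite /e_lam /dfall big_ord1 /= mul0r subr0 divr1. Qed.

Lemma e_lamS i : i.+1%:R * E i.+1 = (1 - i%:R * lam) * E i.
Proof.
rewrite /e_lam /dfall big_ord_recr /= factS natrM.
have hS : 1 + i%:R != 0 :> R by rewrite -mulrS pnatr_eq0.
by field; rewrite hS natr_fact_neq0.
Qed.

Lemma e_lam_trunc2_eq0 i : (i < 2)%N -> T i = 0.
Proof. by case: i => [|[|]]. Qed.

Section Truncated.
Variable N : nat.
Local Notation tr := (ps_trunc N).
Local Notation L := (1 + lam%:P * 'X).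

Lemma coef_one_add_lamX_mul p i :
  (L * p)`_i = p`_i + (if i is j.+1 then lam * p`_j else 0).
Proof.
rewrite mulrDl mul1r -mulrA coefD coefCM coefXM.
by case: i => [|i] /=; rewrite ?mulr0.
Qed.

Lemma ps_trunc_e_lam : eqmodX N (tr E) (1 + 'X * tr Q).
Proof.
apply/eqmodXP => i hi; rewrite coefD coef1 coefXM coef_ps_trunc //.
by case: i hi => [|i] hi; rewrite ?e_lam0 ?addr0 // add0r coef_ps_trunc // ltnW.
Qed.

Lemma ps_trunc_e_lam_ode : eqmodX N (L * tr (ps_deriv E)) (tr E).
Proof.
apply/eqmodXP => i hi; rewrite coef_one_add_lamX_mul !coef_ps_trunc //.
case: i hi => [|i] hi; first by rewrite /ps_deriv e_lam1 e_lam0 addr0.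
rewrite coef_ps_trunc ?(ltnW hi) // /ps_deriv.
rewrite -[e_lam _ i.+2 *+ _]mulr_natl -[e_lam _ i.+1 *+ _]mulr_natl e_lamS.
by ring.
Qed.

Lemma ps_trunc_geom : eqmodX N (L * tr V) 1.
Proof.
apply/eqmodXP => i hi; rewrite coef_one_add_lamX_mul coef1 coef_ps_trunc //.
case: i hi => [|i] hi; first by rewrite addr0.
by rewrite coef_ps_trunc ?(ltnW hi) // exprS /=; ring.
Qed.

Lemma ps_trunc_e_lam_m1_div_t_inv : eqmodX N (tr Q * tr B) 1.
Proof.
apply/eqmodXP => i hi; rewrite coef_ps_trunc_mul // ps_mul_inv.
  by rewrite coef1 /ps_one; case: (i == 0%N).
by rewrite /e_lam_m1_div_t e_lam1 oner_eq0.
Qed.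

Lemma ps_trunc_deriv_e_lam_trunc2 :
  eqmodX N (tr (ps_deriv T)) (tr (ps_deriv E) - 1).
Proof.
apply/eqmodXP => i hi; rewrite coefB coef1 !coef_ps_trunc // /ps_deriv.
by case: i hi => [|i] hi; rewrite /= ?e_lam1 ?subrr ?subr0.
Qed.

(* Multiply by (1 + lam t) V = 1, then use (1 + lam t) e_lam' = e_lam = 1 + t Q
   and Q B = 1. *)
Lemma inv_mul_deriv_e_lam :
  eqmodX N (tr B * (tr (ps_deriv E) - 1))
           ('X * tr V - lam%:P * ('X * (tr B * tr V))).
Proof.
set D := tr (ps_deriv E).
have -> : tr B * (D - 1) =
          (1 - L * tr V) * (tr B * (D - 1)) + tr V * tr B * (L * D - L) by ring.
apply: eqmodX_trans.
  apply: eqmodX_add.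
    apply: eqmodX_mul (eqmodX_refl _ _).
    exact: eqmodX_sub (eqmodX_refl _ 1) ps_trunc_geom.
  apply: eqmodX_mul (eqmodX_refl _ _) (eqmodX_sub _ (eqmodX_refl _ _)).
  exact: eqmodX_trans ps_trunc_e_lam_ode ps_trunc_e_lam.
have -> : (1 - 1) * (tr B * (D - 1)) + tr V * tr B * (1 + 'X * tr Q - L) =
          'X * tr V * (tr Q * tr B) - lam%:P * ('X * (tr B * tr V)) by ring.
rewrite -[X in eqmodX _ _ (X - _)]mulr1.
apply: eqmodX_sub (eqmodX_refl _ _).
exact: eqmodX_mul (eqmodX_refl _ _) ps_trunc_e_lam_m1_div_t_inv.
Qed.

Lemma inv_mul_deriv_pow k :
  eqmodX N (tr (ps_mul B (ps_deriv (ps_pow T k))))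
           ('X * (tr (W k) - lam%:P * tr (ps_mul B (W k))) *+ k).
Proof.
set P := tr T ^+ k.-1.
have hW : eqmodX N (tr (W k)) (P * tr V).
  apply: eqmodX_trans (ps_trunc_mul _ _ _) _.
  exact: eqmodX_mul (ps_trunc_pow _ _ _) (eqmodX_refl _ _).
have hBW : eqmodX N (tr (ps_mul B (W k))) (tr B * (P * tr V)).
  exact: eqmodX_trans (ps_trunc_mul _ _ _) (eqmodX_mul (eqmodX_refl _ _) hW).
apply: eqmodX_trans (ps_trunc_mul _ _ _) _.
apply: eqmodX_trans (eqmodX_mul (eqmodX_refl _ _) (ps_trunc_deriv_pow _ _ _)) _.
apply: eqmodX_trans.
  apply: eqmodX_mul (eqmodX_refl _ _) (eqmodX_muln _ _).
  exact: eqmodX_mul ps_trunc_deriv_e_lam_trunc2 (eqmodX_refl _ _).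
rewrite mulrnAr mulrA.
apply: eqmodX_trans.
  exact: eqmodX_muln _ (eqmodX_mul inv_mul_deriv_e_lam (eqmodX_refl _ _)).
apply: eqmodX_sym; apply: eqmodX_trans.
  apply/eqmodX_muln/(eqmodX_mul (eqmodX_refl _ _)).
  exact: eqmodX_sub hW (eqmodX_mul (eqmodX_refl _ _) hBW).
apply: eqmodX_muln.
have -> : 'X * (P * tr V - lam%:P * (tr B * (P * tr V))) =
          ('X * tr V - lam%:P * ('X * (tr B * tr V))) * P by ring.
exact: eqmodX_refl.
Qed.

End Truncated.

Lemma coef_inv_mul_deriv_pow k m :
  ps_mul B (ps_deriv (ps_pow T k)) m.+1 = (W k m - lam * ps_mul B (W k) m) *+ k.
Proof.
have /eqmodXP/(_ m.+1 (ltnSn _)) := inv_mul_deriv_pow m.+2 k.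
by rewrite coefMn coefXM /= coefB coefCM !coef_ps_trunc.
Qed.

Lemma ps_pow_e_lam_trunc2_eq0 k i : (i < 2 * k)%N -> ps_pow T k i = 0.
Proof. exact/ps_pow_eq0/e_lam_trunc2_eq0. Qed.

Lemma ps_mul_pow_geom_eq0 k i : (i < 2 * k.-1)%N -> W k i = 0.
Proof. exact/ps_mul_eq0/ps_pow_e_lam_trunc2_eq0. Qed.

Lemma ps_mul_pow_geom_shift k j : (1 <= k)%N -> (k <= j)%N ->
  W k (j + k - 2) =
    \sum_(k <= l < j.+1) ps_pow T k.-1 (l + k - 2) * (- lam) ^+ (j - l).
Proof.
case: k => // k _ hkj; rewrite (ps_mul_from _ _ (@ps_pow_e_lam_trunc2_eq0 k)).
by apply: big_nat_shift => [|i hi]; [lia | congr (ps_pow _ _ _ * _ ^+ _); lia].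
Qed.

Lemma ps_mul_inv_pow_geom_shift k n : (1 <= k)%N -> (k <= n)%N ->
  ps_mul B (W k) (n + k - 2) = \sum_(k <= j < n.+1) W k (j + k - 2) * B (n - j).
Proof.
case: k => // k _ hkn.
rewrite ps_mulC (ps_mul_from _ _ (@ps_mul_pow_geom_eq0 k.+1)).
by apply: big_nat_shift => [|i hi]; [lia | congr (W k.+1 _ * B _); lia].
Qed.

Lemma sum_binomial_S2trunc_dbeta n k : (1 <= k)%N -> (k <= n)%N ->
  \sum_(0 <= j < n.+1)
     'C(n + k - 1, j)%:R * S2trunc lam (n - j + k) k * dbeta lam j
  = (n + k - 1)`!%:R / k`!%:R * ps_mul B (ps_deriv (ps_pow T k)) (n + k - 1).
Proof.
move=> hk hkn; rewrite mulrAC -binomial_egf_deriv big_distrl /=.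
rewrite (@big_cat_nat _ _ _ n.+1 0 (n + k - 1).+1) //=; last lia.
rewrite [X in _ = _ + X]big_nat_cond [X in _ = _ + X]big1 ?addr0; last first.
  move=> j /andP [/andP [hnj _] _].
  by rewrite ps_pow_e_lam_trunc2_eq0 ?mulr0 ?mul0r //; lia.
apply: eq_big_nat => j /andP [_ hj].
rewrite /S2trunc /dbeta (_ : (n - j + k = (n + k - 1 - j).+1)%N); last lia.
by ring.
Qed.

Lemma sum_S2trunc_geom n k : (1 <= k)%N -> (k <= n)%N ->
  \sum_(k <= l < n.+1)
     S2trunc lam (l + k - 2) (k - 1) / (l + k - 2)`!%:R * (- lam) ^+ (n - l)
  = W k (n + k - 2) / (k.-1)`!%:R.
Proof.
move=> hk hkn; rewrite ps_mul_pow_geom_shift // big_distrl /=.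
apply: eq_bigr => l _.
by rewrite /S2trunc subn1; field; rewrite !natr_fact_neq0.
Qed.

Lemma sum_S2trunc_dbeta_geom n k : (1 <= k)%N -> (k <= n)%N ->
  \sum_(k <= j < n.+1) \sum_(k <= l < j.+1)
     S2trunc lam (l + k - 2) (k - 1) * dbeta lam (n - j) * (- lam) ^+ (j - l + 1)
       / ((l + k - 2)`!%:R * (n - j)`!%:R)
  = - lam * ps_mul B (W k) (n + k - 2) / (k.-1)`!%:R.
Proof.
move=> hk hkn; rewrite ps_mul_inv_pow_geom_shift // big_distrr big_distrl /=.
apply: eq_big_nat => j /andP [hkj _].
rewrite ps_mul_pow_geom_shift // big_distrl big_distrr big_distrl /=.
apply: eq_bigr => l _.
by rewrite /S2trunc /dbeta subn1 addn1 exprS; field; rewrite !natr_fact_neq0.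
Qed.

End DegenerateExponential.

Theorem theorem6 (R : realFieldType) (lam : R) (n k : nat)
  (hlam : lam != 0) (hk : (1 <= k)%N) (hn : (1 <= n)%N) (hkn : (k <= n)%N) :
  \sum_(0 <= j < n.+1)
      ('C(n + k - 1, j))%:R * S2trunc lam (n - j + k)%N k * dbeta lam j
  = ((n + k - 1)`!)%:R *
    ( \sum_(k <= l < n.+1)
        S2trunc lam (l + k - 2)%N (k - 1)%N / ((l + k - 2)`!)%:R
          * (- lam) ^+ (n - l)%N
    + \sum_(k <= j < n.+1) \sum_(k <= l < j.+1)
        S2trunc lam (l + k - 2)%N (k - 1)%N * dbeta lam (n - j)%N
          * (- lam) ^+ (j - l + 1)%N
          / (((l + k - 2)`!)%:R * ((n - j)`!)%:R) ).
Proof.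
rewrite sum_binomial_S2trunc_dbeta // sum_S2trunc_geom // sum_S2trunc_dbeta_geom //.
have -> : (n + k - 1 = (n + k - 2).+1)%N by lia.
have hfact : k`!%:R = k%:R * (k.-1)`!%:R :> R by rewrite -natrM -(prednK hk) factS.
rewrite coef_inv_mul_deriv_pow -mulr_natr hfact.
by field; rewrite !natr_fact_neq0 pnatr_eq0 -lt0n hk.
Qed.
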